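(* For every non-negative integer $k$ and every proper $3$-coloring $\varphi$ of $G_k$, we have $\varphi(v_k)=\varphi(v_0)$ and $\varphi(u_k)=\varphi(u_0)$.
   Context: The outerplanar graphs $G_k$ are defined inductively. $G_0$ has vertex set $\{v_0,u_0\}$ and the single edge $\{v_0,u_0\}$. For $i\ge 1$, $G_i$ is obtained from $G_{i-1}$ by adding six new vertices $a_i,b_i,c_i,d_i,v_i,u_i$ and the edges $\{a_i,b_i\},\{c_i,d_i\},\{a_i,v_i\},\{b_i,v_i\},\{c_i,u_i\},\{d_i,u_i\},\{a_i,v_{i-1}\},\{b_i,v_{i-1}\},\{c_i,u_{i-1}\},\{d_i,u_{i-1}\}$. A proper $3$-coloring is a map $V(G_k)\to\{1,2,3\}$ giving adjacent vertices different colors. *)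

From Stdlib Require List.
From mathcomp Require Import all_boot.
Set Implicit Arguments. Unset Strict Implicit. Unset Printing Implicit Defensive.

(* Vertex names of the graphs G_k: v_i, u_i (i >= 0) and a_i,b_i,c_i,d_i (i >= 1). *)
Inductive vtx : Type :=
| vV of nat | vU of nat | vA of nat | vB of nat | vC of nat | vD of nat.


(* The six-plus-four edges added at step i >= 1 (as unordered pairs, listed once). *)
Definition step_edges (i : nat) : list (vtx * vtx) :=
  [:: (vA i, vB i); (vC i, vD i); (vA i, vV i); (vB i, vV i);
      (vC i, vU i); (vD i, vU i); (vA i, vV i.-1); (vB i, vV i.-1);
      (vC i, vU i.-1); (vD i, vU i.-1)].

Fixpoint edges (k : nat) : list (vtx * vtx) :=
  match k with
  | 0 => [:: (vV 0, vU 0)]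
  | k'.+1 => edges k' ++ step_edges k'.+1
  end.

(* A proper 3-colouring of G_k: a map V(G_k) -> {1,2,3} (here colours 'I_3;
   values outside V(G_k) are irrelevant) with adjacent vertices coloured differently. *)
Definition proper3 (k : nat) (phi : vtx -> 'I_3) : Prop :=
  forall x y, List.In (x, y) (edges k) -> phi x <> phi y.

(* v_(i-1) and v_i are both adjacent to the two ends of the edge
   a_i b_i, so a proper 3-colouring gives both of them the one colour missed
   by a_i and b_i; likewise u_(i-1) and u_i through the edge c_i d_i. *)
From mathcomp Require Import all_boot.

Set Implicit Arguments.

Lemma ord3_common_neighbour (a b x y : 'I_3) :
  a <> b -> a <> x -> b <> x -> a <> y -> b <> y -> x = y.
Proof.
move=> /eqP + /eqP + /eqP + /eqP + /eqP +; move: a b x y.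
by do 4![case=> [[|[|[|//]]]] ?] => //= *; apply: val_inj.
Qed.

Section ProperColouring.

Variable phi : vtx -> 'I_3.

Lemma proper3_pred (k : nat) : proper3 k.+1 phi -> proper3 k phi.
Proof. by move=> Hphi x y xy; apply: Hphi; apply: List.in_or_app; left. Qed.

Lemma proper3_step_edges (k : nat) :
  proper3 k.+1 phi ->
  forall x y, List.In (x, y) (step_edges k.+1) -> phi x <> phi y.
Proof. by move=> Hphi x y xy; apply: Hphi; apply: List.in_or_app; right. Qed.

Lemma proper3_step_colours (k : nat) :
  proper3 k.+1 phi ->
  phi (vV k.+1) = phi (vV k) /\ phi (vU k.+1) = phi (vU k).
Proof.
move=> /proper3_step_edges step; split.
- by apply: (@ord3_common_neighbour (phi (vA k.+1)) (phi (vB k.+1)));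
    apply: step; rewrite /=; tauto.
- by apply: (@ord3_common_neighbour (phi (vC k.+1)) (phi (vD k.+1)));
    apply: step; rewrite /=; tauto.
Qed.

End ProperColouring.

Theorem lemma6p8 (k : nat) (phi : vtx -> 'I_3) :
  proper3 k phi -> phi (vV k) = phi (vV 0) /\ phi (vU k) = phi (vU 0).
Proof.
elim: k => [|k IH] // Hphi.
have [-> ->] := proper3_step_colours Hphi.
exact/IH/proper3_pred.
Qed.
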